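(* Consider the Parallel Symmetric Subspace Decomposition (P-SSD) algorithm described in the context, executed by $M$ agents over an arbitrary, possibly time-varying, sequence of communication digraphs $\{G_k=(\{1,\dots,M\},E_k)\}_{k\ge 1}$. Then the algorithm reaches an equilibrium after a finite number of iterations, i.e., there exists $k\in\mathbb{N}$ such that $C_p^i=C_k^i$ for all $p>k$ and all $i\in\{1,\dots,M\}$.
   Context: Data setting: a map $T:\mathcal{M}\to\mathcal{M}$, $\mathcal{M}\subseteq\mathbb{R}^n$; a dictionary $D(x)=[d_1(x),\dots,d_{N_d}(x)]$ of real-valued functions on $\mathcal{M}$; data matrices $X,Y\in\mathbb{R}^{N\times n}$ whose $i$-th rows $x_i^T,y_i^T$ satisfy $y_i=T(x_i)$; $D(X)\in\mathbb{R}^{N\times N_d}$ is the matrix with rows $D(x_1),\dots,D(x_N)$ (similarly $D(Y)$). Assumption: $D(X)$ and $D(Y)$ have full column rank. There are $M$ agents; agent $i$ holds local dictionary snapshots $D(X_i),D(Y_i)$ (obtained from a subset of the snapshot pairs) such that the union over $i$ of the rows of $[D(X_i),D(Y_i)]$ equals the set of rows of $[D(X),D(Y)]$. There are signature matrices $D(X_s),D(Y_s)$ with full column rank such that the rows of $[D(X_s),D(Y_s)]$ are contained in the rows of $[D(X_i),D(Y_i)]$ for every $i$. SSD algorithm: given $A,B\in\mathbb{R}^{m\times q}$, set $A_1=A$, $B_1=B$, $C=I_q$, and iterate: let $[Z^A_j;Z^B_j]$ be a matrix whose columns form a basis of the null space of $[A_j,B_j]$ (with $Z^A_j$ having as many rows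 as $A_j$ has columns); if the null space is trivial return $0$; if the number of rows of $Z^A_j$ is at most its number of columns, return $C$; otherwise set $C\leftarrow CZ^A_j$, $A_{j+1}=A_jZ^A_j$, $B_{j+1}=B_jZ^A_j$. Its output is denoted $\mathrm{SSD}(A,B)$. P-SSD algorithm: at iteration $k\ge1$ the digraph $G_k$ is used; an edge $(j,i)\in E_k$ means $j$ is an in-neighbor of $i$, and $\mathcal{N}_{\mathrm{in}}^k(i)$ denotes the in-neighbors of $i$ in $G_k$. Each agent $i$ sets $C_0^i=I_{N_d}$, $\mathrm{flag}_0^i=0$, and for $k=1,2,\dots$: receives $C_{k-1}^j$ for $j\in\mathcal{N}_{\mathrm{in}}^k(i)$; sets $D_k^i=\mathrm{basis}\big(\bigcap_{j\in\{i\}\cup\mathcal{N}_{\mathrm{in}}^k(i)}\mathcal{R}(C_{k-1}^j)\big)$; sets $E_k^i=\mathrm{SSD}(D(X_i)D_k^i,D(Y_i)D_k^i)$; if the number of columns of $D_k^iE_k^i$ is strictly less than that of $C_{k-1}^i$, sets $C_k^i=D_k^iE_k^i$ and $\mathrm{flag}_k^i=0$; otherwise sets $C_k^i=C_{k-1}^i$ and $\mathrm{flag}_k^i=1$; then transmits $C_k^i$ to its out-neighbors. Here $\mathrm{basis}(\mathcal{A})$ returns a matrix whose columns form a basis of the subspace $\mathcal{A}$, and returns $0$ if $\mathcal{A}=\{0\}$; the matrix $0$ is regarded as having $0$ columns. $\mathcal{R}(\cdot)$ denotes range space. *)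

From HB Require Import structures.
From mathcomp Require Import all_boot all_order all_algebra.
From mathcomp Require Import reals.
Set Implicit Arguments. Unset Strict Implicit. Unset Printing Implicit Defensive.
Import Order.TTheory GRing.Theory Num.Theory.
Local Open Scope ring_scope.

(* A matrix with a variable number of columns (the "0 matrix" of the paper,
   which is regarded as having 0 columns, is a matrix with 0 columns). *)
Definition vmx (R : fieldType) (r : nat) := {c : nat & 'M[R]_(r, c)}.
Definition ncols (R : fieldType) (r : nat) (A : vmx R r) : nat := projT1 A.
Definition vmat (R : fieldType) (r : nat) (A : vmx R r) : 'M[R]_(r, ncols A) :=
  projT2 A.
Definition mkvmx (R : fieldType) (r c : nat) (A : 'M[R]_(r, c)) : vmx R r :=
  existT (fun c => 'M[R]_(r, c)) c A.

(* For p = 0 this holds iff the subspace is {0}, matching basis(.)=0. *)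
Definition colbasis (R : fieldType) (k p : nat) (P : 'cV[R]_k -> Prop)
  (B : 'M[R]_(k, p)) : Prop :=
  [/\ (forall j : 'I_p, P (col j B)),
      (forall v, P v -> exists w : 'cV[R]_p, v = B *m w) &
      (forall w : 'cV[R]_p, B *m w = 0 -> w = 0)].

Definition nullsp (R : fieldType) (m k : nat) (A : 'M[R]_(m, k)) (v : 'cV[R]_k)
  : Prop := A *m v = 0.
Definition inrange (R : fieldType) (k c : nat) (A : 'M[R]_(k, c)) (v : 'cV[R]_k)
  : Prop := exists w : 'cV[R]_c, v = A *m w.

(* The SSD algorithm, as a relation (the choice of null-space basis at each
   step is arbitrary). [ssd_run A B C out]: started from current data
   A_j = A, B_j = B, C = C, the algorithm returns [out]. *)
Inductive ssd_run (R : fieldType) (m q : nat) :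
  forall qj : nat, 'M[R]_(m, qj) -> 'M[R]_(m, qj) -> 'M[R]_(q, qj) -> vmx R q -> Prop :=
| ssd_trivial qj (A B : 'M[R]_(m, qj)) (C : 'M[R]_(q, qj)) p
    (Z : 'M[R]_(qj + qj, p)) :
    colbasis (nullsp (row_mx A B)) Z ->
    (forall z, nullsp (row_mx A B) z -> z = 0) ->
    ssd_run A B C (mkvmx (0 : 'M[R]_(q, 0)))
| ssd_stop qj (A B : 'M[R]_(m, qj)) (C : 'M[R]_(q, qj)) p
    (Z : 'M[R]_(qj + qj, p)) :
    colbasis (nullsp (row_mx A B)) Z ->
    ~ (forall z, nullsp (row_mx A B) z -> z = 0) ->
    (qj <= p)%N ->
    ssd_run A B C (mkvmx C)
| ssd_step qj (A B : 'M[R]_(m, qj)) (C : 'M[R]_(q, qj)) p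
    (Z : 'M[R]_(qj + qj, p)) out :
    colbasis (nullsp (row_mx A B)) Z ->
    ~ (forall z, nullsp (row_mx A B) z -> z = 0) ->
    (p < qj)%N ->
    ssd_run (A *m usubmx Z) (B *m usubmx Z) (C *m usubmx Z) out ->
    ssd_run A B C out.

Definition SSD (R : fieldType) (m q : nat) (A B : 'M[R]_(m, q)) (E : vmx R q)
  : Prop := ssd_run A B (1%:M : 'M[R]_q) E.

Definition Dmat (R : fieldType) (n Nd N : nat) (d : 'I_Nd -> 'rV[R]_n -> R)
  (X : 'M[R]_(N, n)) : 'M[R]_(N, Nd) :=
  \matrix_(i < N, j < Nd) d j (row i X).

(* One P-SSD iteration k >= 1 for agent i.
   Cprev = (C_{k-1}^j)_j, Ek k j i = (j,i) is an edge of G_k,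
   DXi, DYi: local dictionary snapshots of agent i; Cnew = C_k^i. *)
Definition pssd_step (R : fieldType) (Mag Nd Ni : nat)
  (Ek : 'I_Mag -> 'I_Mag -> bool) (i : 'I_Mag)
  (DXi DYi : 'M[R]_(Ni, Nd)) (Cprev : 'I_Mag -> vmx R Nd) (Cnew : vmx R Nd)
  : Prop :=
  exists (Dk : vmx R Nd) (Ek_ : vmx R (ncols Dk)),
    [/\ colbasis (fun v => forall j : 'I_Mag, (j == i) || Ek j i ->
                              inrange (vmat (Cprev j)) v) (vmat Dk),
        SSD (DXi *m vmat Dk) (DYi *m vmat Dk) Ek_ &
        (if (ncols Ek_ < ncols (Cprev i))%N
         then Cnew = mkvmx (vmat Dk *m vmat Ek_)
         else Cnew = Cprev i)].

Definition pssd_execution (R : fieldType) (Mag Nd : nat)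
  (Ni : 'I_Mag -> nat) (DXi DYi : forall i : 'I_Mag, 'M[R]_(Ni i, Nd))
  (E : nat -> 'I_Mag -> 'I_Mag -> bool) (C : nat -> 'I_Mag -> vmx R Nd) : Prop :=
  (forall i, C 0%N i = mkvmx (1%:M : 'M[R]_Nd)) /\
  (forall (k : nat) (i : 'I_Mag),
     pssd_step (E k.+1) i (DXi i) (DYi i) (C k) (C k.+1 i)).

From HB Require Import structures.
From mathcomp Require Import all_boot all_order all_algebra.
From mathcomp Require Import reals.
From Stdlib Require Import Classical.
Import Order.TTheory GRing.Theory Num.Theory.
Local Open Scope ring_scope.

(* An agent's C_k^i changes only when its number of columns strictly drops.
   Hence the total number of columns over all agents is a natural-number
   potential which never increases and strictly decreases whenever some agent
   changes; it is eventually constant, and from then on no agent changes. *)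

Lemma nonincreasing_eventually_constant (f : nat -> nat) :
  (forall k, f k.+1 <= f k)%N -> exists k, forall p, (k <= p)%N -> f p = f k.
Proof.
move=> f_noninc.
have f_homo : {homo f : k p / (k <= p)%N >-> (p <= k)%N}.
  by apply: homo_leq => [m|m l o lml lmo|k]; [|apply: leq_trans lmo lml|].
suff: forall m k, f k = m -> exists k, forall p, (k <= p)%N -> f p = f k.
  by move=> /(_ _ 0%N erefl).
elim/ltn_ind=> m IHm k fk.
case: (classic (exists p, (k <= p)%N /\ (f p < f k)%N)) => [[p [kp fpk]]|].
  by apply: (IHm (f p)) => //; rewrite -fk.
move=> no_drop; exists k => p kp; apply/eqP; rewrite eqn_leq f_homo //=.
by rewrite leqNgt; apply/negP => fpk; apply: no_drop; exists p.
Qed.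

Section PotentialStabilisation.

Variables (I : finType) (T : Type) (mu : T -> nat) (s : nat -> I -> T).

Hypothesis step_stays_or_drops :
  forall k i, s k.+1 i = s k i \/ (mu (s k.+1 i) < mu (s k i))%N.

Let potential k := (\sum_(i : I) mu (s k i))%N.

Lemma step_mu_le k i : (mu (s k.+1 i) <= mu (s k i))%N.
Proof. by case: (step_stays_or_drops k i) => [->|/ltnW]. Qed.

Lemma potential_nonincreasing k : (potential k.+1 <= potential k)%N.
Proof. by apply: leq_sum => i _; apply: step_mu_le. Qed.

Lemma potential_drops k i :
  (mu (s k.+1 i) < mu (s k i))%N -> (potential k.+1 < potential k)%N.
Proof.
move=> mu_lt.
rewrite /potential (bigD1 i) //= [X in (_ < X)%N](bigD1 i) //= -addSn.
by apply: leq_add mu_lt _; apply: leq_sum => j _; apply: step_mu_le.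
Qed.

Lemma eventually_constant :
  exists k, forall p, (k <= p)%N -> forall i, s p i = s k i.
Proof.
have [k potential_const] :=
  nonincreasing_eventually_constant _ potential_nonincreasing.
exists k; elim=> [|p IHp]; first by case: k {potential_const}.
rewrite leq_eqVlt ltnS => /predU1P [<- //|kp] i.
case: (step_stays_or_drops p i) => [->|/potential_drops]; first exact: IHp.
by rewrite !potential_const ?ltnn // ltnW.
Qed.

End PotentialStabilisation.

Lemma pssd_step_stays_or_shrinks (R : fieldType) (Mag Nd Ni : nat)
    (Ek : 'I_Mag -> 'I_Mag -> bool) (i : 'I_Mag) (DXi DYi : 'M[R]_(Ni, Nd))
    (Cprev : 'I_Mag -> vmx R Nd) (Cnew : vmx R Nd) :
  pssd_step Ek i DXi DYi Cprev Cnew ->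
  Cnew = Cprev i \/ (ncols Cnew < ncols (Cprev i))%N.
Proof. by case=> Dk [Ek_ [_ _]]; case: ifP => shrinks ->; [right|left]. Qed.

Theorem proposition4p2
  (R : realType) (n N Nd Mag : nat)
  (Mset : 'rV[R]_n -> Prop) (T : 'rV[R]_n -> 'rV[R]_n)
  (hT : forall x, Mset x -> Mset (T x))
  (d : 'I_Nd -> 'rV[R]_n -> R)
  (X Y : 'M[R]_(N, n))
  (hXM : forall r : 'I_N, Mset (row r X))
  (hXY : forall r : 'I_N, row r Y = T (row r X))
  (hDX : \rank (Dmat d X) = Nd) (hDY : \rank (Dmat d Y) = Nd)
  (Ni : 'I_Mag -> nat) (Xi Yi : forall i : 'I_Mag, 'M[R]_(Ni i, n))
  (hloc : forall (i : 'I_Mag) (r : 'I_(Ni i)), exists r' : 'I_N,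
      row r (Xi i) = row r' X /\ row r (Yi i) = row r' Y)
  (hunion1 : forall (i : 'I_Mag) (r : 'I_(Ni i)), exists r' : 'I_N,
      row r (row_mx (Dmat d (Xi i)) (Dmat d (Yi i)))
      = row r' (row_mx (Dmat d X) (Dmat d Y)))
  (hunion2 : forall r' : 'I_N, exists (i : 'I_Mag) (r : 'I_(Ni i)),
      row r (row_mx (Dmat d (Xi i)) (Dmat d (Yi i)))
      = row r' (row_mx (Dmat d X) (Dmat d Y)))
  (Ns : nat) (Xs Ys : 'M[R]_(Ns, n))
  (hDXs : \rank (Dmat d Xs) = Nd) (hDYs : \rank (Dmat d Ys) = Nd)
  (hsig : forall (i : 'I_Mag) (r : 'I_Ns), exists r' : 'I_(Ni i),
      row r (row_mx (Dmat d Xs) (Dmat d Ys))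
      = row r' (row_mx (Dmat d (Xi i)) (Dmat d (Yi i))))
  (E : nat -> 'I_Mag -> 'I_Mag -> bool)
  (C : nat -> 'I_Mag -> vmx R Nd)
  (hC : pssd_execution (fun i => Dmat d (Xi i)) (fun i => Dmat d (Yi i)) E C) :
  exists k : nat, forall p : nat, (k < p)%N -> forall i : 'I_Mag, C p i = C k i.
Proof.
have [_ pssd_steps] := hC.
have [k C_const] : exists k, forall p, (k <= p)%N -> forall i, C p i = C k i.
  apply: (@eventually_constant _ _ (@ncols R Nd)) => p i.
  exact: pssd_step_stays_or_shrinks (pssd_steps p i).
by exists k => p /ltnW; apply: C_const.
Qed.
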